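(* Let $A$ be a real $m\times n$ matrix, $\mathbf b\in\mathbb R^m$, $\mathbf c\in\mathbb R^n$ (row vector), such that the linear program $\max\mathbf c\mathbf x$ s.t. $A\mathbf x\le\mathbf b$, $\mathbf x\ge0$ is bounded with unique optimal primal and dual solutions $\mathbf x^*$, $\mathbf y^*$. Then for every primal feasible $\mathbf x$, \[ \|A_{V,U}(\mathbf x^*_U-\mathbf x_U)\|\ge\gamma(A,\mathbf b,\mathbf c)\,\|\mathbf x^*_U-\mathbf x_U\|_\infty. \]
   Context: The dual is $\min\mathbf y\mathbf b$ s.t. $\mathbf yA\ge\mathbf c$, $\mathbf y\ge0$. $U=\{i:x^*_i>0\}$, $V=\{j:y^*_j>0\}$; $A_{V,U}$ is the submatrix with rows $V$ and columns $U$; $\mathbf x_U$ is the restriction of $\mathbf x$ to coordinates $U$. $\gamma(A,\mathbf b,\mathbf c)=\min_{k\in U}\mathrm{dist}(A_{V,k},\mathrm{span}(A_{V,U\setminus\{k\}}))$, the distance from column $k$ of $A_{V,U}$ to the span of the other columns of $A_{V,U}$. $\|\cdot\|$ is the Euclidean norm and $\|\cdot\|_\infty$ the max-norm. *)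

From HB Require Import structures.
From mathcomp Require Import all_boot all_order all_algebra.
From mathcomp Require Import classical_sets reals.
Set Implicit Arguments. Unset Strict Implicit. Unset Printing Implicit Defensive.
Import Order.TTheory GRing.Theory Num.Theory.
Local Open Scope ring_scope.
Local Open Scope classical_set_scope.

Section LP.
Variables (R : realType) (m n : nat).
Variables (A : 'M[R]_(m, n)) (b : 'cV[R]_m) (c : 'rV[R]_n).

Definition primal_feasible (x : 'cV[R]_n) : Prop :=
  (forall i, (A *m x) i 0 <= b i 0) /\ (forall j, 0 <= x j 0).
Definition primal_obj (x : 'cV[R]_n) : R := (c *m x) 0 0.
Definition primal_optimal (x : 'cV[R]_n) : Prop :=
  primal_feasible x /\ forall x', primal_feasible x' -> primal_obj x' <= primal_obj x.
Definition primal_bounded : Prop :=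
  exists M : R, forall x, primal_feasible x -> primal_obj x <= M.

Definition dual_feasible (y : 'rV[R]_m) : Prop :=
  (forall j, c 0 j <= (y *m A) 0 j) /\ (forall i, 0 <= y 0 i).
Definition dual_obj (y : 'rV[R]_m) : R := (y *m b) 0 0.
Definition dual_optimal (y : 'rV[R]_m) : Prop :=
  dual_feasible y /\ forall y', dual_feasible y' -> dual_obj y <= dual_obj y'.

Definition suppU (xs : 'cV[R]_n) : {set 'I_n} := [set j | 0 < xs j 0].
Definition suppV (ys : 'rV[R]_m) : {set 'I_m} := [set i | 0 < ys 0 i].

Definition normAVU (V : {set 'I_m}) (U : {set 'I_n}) (z : 'cV[R]_n) : R :=
  Num.sqrt (\sum_(i in V) (\sum_(j in U) A i j * z j 0) ^+ 2).

(* Max-norm of z_U (0 when U is empty). *)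
Definition norminfU (U : {set 'I_n}) (z : 'cV[R]_n) : R :=
  \big[Num.max/0]_(j in U) `|z j 0|.

(* Euclidean distance from column k of A_{V,U} to the span of the other
   columns A_{V,U\{k}}: infimum of ||A_{V,k} - sum_{j in U\{k}} lam_j A_{V,j}||. *)
Definition dist_col (V : {set 'I_m}) (U : {set 'I_n}) (k : 'I_n) : R :=
  inf [set r : R | exists lam : 'cV[R]_n,
         r = Num.sqrt (\sum_(i in V)
               (A i k - \sum_(j in U :\ k) A i j * lam j 0) ^+ 2)].

Definition gammaLP (xs : 'cV[R]_n) (ys : 'rV[R]_m) : R :=
  inf [set r : R | exists2 k, k \in suppU xs & r = dist_col (suppV ys) (suppU xs) k].

End LP.

From HB Require Import structures.
From mathcomp Require Import all_boot all_order all_algebra.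
From mathcomp Require Import classical_sets reals.
Set Implicit Arguments. Unset Strict Implicit. Unset Printing Implicit Defensive.
Import Order.TTheory GRing.Theory Num.Theory.
Local Open Scope ring_scope.

(* If k in U maximises |z_k| for z = x* - x, then A_{V,U} z = z_k (A_{V,k} -
   sum_{j in U\k} lam_j A_{V,j}) with lam_j = -z_j / z_k, so its norm is at
   least |z_k| dist(A_{V,k}, span A_{V,U\k}) >= gamma ||z_U||_oo. *)

Lemma inf_le_of_ge0 (R : realType) (E : set R) (x : R) :
  (forall y, E y -> 0 <= y) -> E x -> inf E <= x.
Proof. by move=> E_ge0 Ex; apply: ge_inf => //; exists 0 => y /E_ge0. Qed.

Section ColumnDistance.
Variables (R : realType) (m n : nat) (A : 'M[R]_(m, n)).
Variables (V : {set 'I_m}) (U : {set 'I_n}).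

Lemma dist_col_le (k : 'I_n) (lam : 'cV[R]_n) :
  dist_col A V U k <=
    Num.sqrt (\sum_(i in V) (A i k - \sum_(j in U :\ k) A i j * lam j 0) ^+ 2).
Proof. by apply: inf_le_of_ge0 => [_ [l ->]|]; [exact: sqrtr_ge0 | exists lam]. Qed.

Lemma dist_col_ge0 (k : 'I_n) : 0 <= dist_col A V U k.
Proof.
apply: lb_le_inf => [|_ [l ->]]; last exact: sqrtr_ge0.
by eexists; exists 0.
Qed.

Lemma sum_col_factor (z : 'cV[R]_n) (k : 'I_n) (i : 'I_m) :
  k \in U -> z k 0 != 0 ->
  \sum_(j in U) A i j * z j 0 =
    z k 0 * (A i k - \sum_(j in U :\ k) A i j * (- z j 0 / z k 0)).
Proof.
move=> Uk zk_neq0; rewrite (bigD1 k) //= mulrBr mulrC; congr (_ + _).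
rewrite mulr_sumr -sumrN; apply: eq_big => [j|j _]; first by rewrite in_setD1 andbC.
by rewrite mulNr !mulrN opprK mulrCA [z k 0 * _]mulrCA divff // mulr1.
Qed.

Lemma dist_col_mul_le_normAVU (z : 'cV[R]_n) (k : 'I_n) :
  k \in U -> dist_col A V U k * `|z k 0| <= normAVU A V U z.
Proof.
move=> Uk; have [->|zk_neq0] := eqVneq (z k 0) 0.
  by rewrite normr0 mulr0 sqrtr_ge0.
set lam : 'cV[R]_n := \col_j (- z j 0 / z k 0).
have normAVU_factor : normAVU A V U z = `|z k 0| *
    Num.sqrt (\sum_(i in V) (A i k - \sum_(j in U :\ k) A i j * lam j 0) ^+ 2).
  rewrite -[`|z k 0|]sqrtr_sqr -sqrtrM ?sqr_ge0 // mulr_sumr.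
  congr Num.sqrt; apply: eq_bigr => i _; rewrite -exprMn.
  by rewrite (sum_col_factor _ Uk zk_neq0); congr ((_ * (_ - _)) ^+ 2);
     apply: eq_bigr => j _; rewrite mxE.
by rewrite normAVU_factor mulrC ler_wpM2l // dist_col_le.
Qed.

End ColumnDistance.

Lemma gammaLP_le_dist_col (R : realType) (m n : nat) (A : 'M[R]_(m, n))
    (xs : 'cV[R]_n) (ys : 'rV[R]_m) (k : 'I_n) :
  k \in suppU xs -> gammaLP A xs ys <= dist_col A (suppV ys) (suppU xs) k.
Proof.
by move=> Uk; apply: inf_le_of_ge0 => [_ [k' _ ->]|]; [exact: dist_col_ge0 | exists k].
Qed.

Lemma norminfU_attained (R : realType) (n : nat) (U : {set 'I_n}) (z : 'cV[R]_n)
    (k0 : 'I_n) :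
  k0 \in U -> exists2 k, k \in U & norminfU U z = `|z k 0|.
Proof.
rewrite /norminfU => Uk0.
have [k Uk ->] := @eq_bigmax _ _ _ _ _ _ (fun j => `|z j 0|) Uk0 (fun j _ => normr_ge0 _).
by exists k.
Qed.

Theorem mainTheorem13 (R : realType) (m n : nat) (A : 'M[R]_(m, n))
    (b : 'cV[R]_m) (c : 'rV[R]_n) (xs : 'cV[R]_n) (ys : 'rV[R]_m) :
  primal_bounded A b c ->
  primal_optimal A b c xs ->
  (forall x, primal_optimal A b c x -> x = xs) ->
  dual_optimal A b c ys ->
  (forall y, dual_optimal A b c y -> y = ys) ->
  forall x : 'cV[R]_n, primal_feasible A b x ->
    gammaLP A xs ys * norminfU (suppU xs) (xs - x)
      <= normAVU A (suppV ys) (suppU xs) (xs - x).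
Proof.
move=> _ _ _ _ _ x _.
have [k0 /(norminfU_attained (xs - x))[k Uk ->]|U0] := pickP [in suppU xs]; last first.
  by rewrite /norminfU big_pred0 // mulr0 sqrtr_ge0.
apply: le_trans _ (dist_col_mul_le_normAVU _ _ (xs - x) Uk).
by rewrite ler_wpM2r // gammaLP_le_dist_col.
Qed.
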